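(* Let $f\in\mathbb{R}[x_1,\ldots,x_n]$ be a homogeneous cubic polynomial (homogeneous of degree $3$) which is irreducible in $\mathbb{R}[x_1,\ldots,x_n]$, $f\not\equiv 0$. Then the zero set $\mathcal{F}(f)=f^{-1}(0)\subset\mathbb{R}^n$ contains a regular point of $f$, i.e. a point $x\in\mathbb{R}^n$ with $f(x)=0$ and $\nabla f(x)\neq 0$.
   Context: $\mathcal{F}(f):=\{x\in\mathbb{R}^n: f(x)=0\}$ denotes the zero set of $f$ in $\mathbb{R}^n$. *)

From HB Require Import structures.
From mathcomp Require Import all_boot all_order all_algebra.
From mathcomp Require Import mpoly.
From mathcomp Require Import reals.
Set Implicit Arguments. Unset Strict Implicit. Unset Printing Implicit Defensive.
Import Order.TTheory GRing.Theory Num.Theory.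
Local Open Scope ring_scope.

Definition irreducible_elt (A : comUnitRingType) (p : A) : Prop :=
  p != 0 /\ p \isn't a GRing.unit /\
  forall g h : A, p = g * h -> g \is a GRing.unit \/ h \is a GRing.unit.

Definition zero_set (R : realType) (n : nat) (f : {mpoly R[n]}) : ('I_n -> R) -> Prop :=
  fun x => f.@[x] = 0.

Definition regular_point (R : realType) (n : nat) (f : {mpoly R[n]}) (x : 'I_n -> R) : Prop :=
  exists i : 'I_n, (mderiv i f).@[x] != 0.

From HB Require Import structures.
From mathcomp Require Import all_boot all_order all_algebra.
From mathcomp Require Import mpoly.
From mathcomp Require Import reals.
From mathcomp Require Import polyrcf.
From mathcomp Require Import zify ring.
From Stdlib Require Import Classical.
Import Order.TTheory GRing.Theory Num.Theory.
Local Open Scope ring_scope.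
Set Implicit Arguments. Unset Strict Implicit. Unset Printing Implicit Defensive.

(* Suppose every zero of f is singular and pick y with f(y) <> 0.  For each x the
   cubic Q(t) = f(x + t y) has leading coefficient f(y), and at each of its real
   roots its derivative sum_i y_i (d_i f)(x + t y) vanishes.  A real cubic all of
   whose roots are multiple is a (t - t0)^3, so 27 a^2 Q(0) = b^3, where the
   coefficient b of t^2 depends polynomially on x: 27 f(y)^2 f = L^3 for a
   polynomial L.  Then f = L * (c L^2) with c <> 0 and irreducibility forces L,
   hence f, to be a unit. *)

Lemma horner_eq0_poly (R : numDomainType) (p : {poly R}) :
  (forall t, p.[t] = 0) -> p = 0.
Proof.
move=> p0; apply/eqP; apply: contraT => pn0.
have := @max_poly_roots _ p [seq i%:R | i <- iota 0 (size p)] pn0.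
rewrite size_map size_iota ltnn; apply; first by apply/allP => x _; rewrite /root p0.
by rewrite map_inj_uniq ?iota_uniq // => a b /eqP; rewrite eqr_nat => /eqP.
Qed.

Lemma rmorph_mmap (n : nat) (R S T : nzRingType) (f : R -> S) (h : 'I_n -> S)
    (g : {rmorphism S -> T}) (p : {mpoly R[n]}) :
  g (mmap f h p) = mmap (g \o f) (g \o h) p.
Proof.
rewrite rmorph_sum; apply: eq_bigr => m _; rewrite rmorphM rmorph_prod.
by congr (_ * _); apply: eq_bigr => i _; rewrite rmorphXn.
Qed.

Lemma eq_mmap (n : nat) (R S : nzRingType) (f1 f2 : R -> S) (h1 h2 : 'I_n -> S)
    (p : {mpoly R[n]}) :
  f1 =1 f2 -> h1 =1 h2 -> mmap f1 h1 p = mmap f2 h2 p.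
Proof.
move=> ef eh; apply: eq_bigr => m _; rewrite ef.
by congr (_ * _); apply: eq_bigr => i _; rewrite eh.
Qed.

Section ChainRule.
Variables (R : comNzRingType) (n : nat) (v : 'I_n -> {poly R}).
Local Notation Phi := (mmap (@polyC R) v).

Let chain p := (Phi p)^`() = \sum_i Phi p^`M(i) * (v i)^`().

Let chain_add p q : chain p -> chain q -> chain (p + q).
Proof.
rewrite /chain !rmorphD derivD => -> ->; rewrite -big_split.
by apply: eq_bigr => i _; rewrite mderivD rmorphD mulrDl.
Qed.

Let chain_mul p q : chain p -> chain q -> chain (p * q).
Proof.
rewrite /chain rmorphM derivM => -> ->; rewrite mulr_suml mulr_sumr -big_split.
apply: eq_bigr => i _; rewrite mderivM rmorphD !rmorphM /=.
by rewrite mulrDl -!mulrA [Phi q * _]mulrC.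
Qed.

Let chain_scale c p : chain p -> chain (c *: p).
Proof.
rewrite /chain !mmapZ derivM derivC mul0r add0r => ->; rewrite mulr_sumr.
by apply: eq_bigr => i _; rewrite mderivZ mmapZ mulrA.
Qed.

Let chain_one : chain 1.
Proof.
rewrite /chain rmorph1 -polyC1 derivC big1 // => i _.
by rewrite -mpolyC1 mderivC rmorph0 mul0r.
Qed.

Let chain_X j : chain 'X_j.
Proof.
rewrite /chain mmapX mmap1U (bigD1 j) //= big1 ?addr0 => [|i /negbTE ne].
  rewrite mderivX mnm1E eqxx -{1}(add0m U_(j)%MM) addmK.
  by rewrite scale1r mpolyX0 rmorph1 mul1r.
by rewrite mderivX mnm1E eq_sym ne scale0r rmorph0 mul0r.
Qed.

Lemma deriv_mmap p :
  (mmap (@polyC R) v p)^`() = \sum_i mmap (@polyC R) v p^`M(i) * (v i)^`().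
Proof.
elim/mpolyind: p => [|c m p _ _ IH].
  by rewrite rmorph0 deriv0 big1 // => i _; rewrite mderiv0 rmorph0 mul0r.
apply: chain_add => //; apply: chain_scale; rewrite mpolyXE_id.
apply: big_ind => [|q1 q2|i _]; [exact: chain_one | exact: chain_mul |].
elim: (m i) => [|k IHk]; rewrite ?expr0 ?exprS; first exact: chain_one.
exact: chain_mul.
Qed.

End ChainRule.

Section TopCoef.
Variable R : comNzRingType.
Implicit Types p q : {poly R}.

Definition top_coef p (d : nat) (c : R) := (size p <= d.+1)%N /\ p`_d = c.

Lemma top_coef0 d : top_coef 0 d 0.
Proof. by split; rewrite ?size_poly0 ?coef0. Qed.

Lemma top_coef1 : top_coef 1 0 1.
Proof. by split; rewrite ?size_poly1 ?coef1. Qed.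

Lemma top_coefD p q d a b :
  top_coef p d a -> top_coef q d b -> top_coef (p + q) d (a + b).
Proof.
move=> [sp <-] [sq <-]; split; last by rewrite coefD.
by apply: leq_trans (size_polyD _ _) _; rewrite geq_max sp sq.
Qed.

Lemma top_coefCM c p d a : top_coef p d a -> top_coef (c%:P * p) d (c * a).
Proof.
move=> [sp <-]; split; last by rewrite coefCM.
apply: leq_trans (size_polyMleq _ _) _.
by rewrite size_polyC; have := leq_b1 (c != 0); lia.
Qed.

Lemma top_coefM p q d e a b :
  top_coef p d a -> top_coef q e b -> top_coef (p * q) (d + e) (a * b).
Proof.
move=> [sp <-] [sq <-]; split; first by apply: leq_trans (size_polyMleq _ _) _; lia.
have lt_d : (d < (d + e).+1)%N by lia.
rewrite coefM (bigD1 (Ordinal lt_d)) //= addKn big1 ?addr0 // => -[j /= lt_j] ne_j.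
have {}ne_j : j != d by apply: contra ne_j => /eqP e_j; apply/eqP/val_inj.
case: (ltngtP j d) ne_j => // lt_jd _.
  by rewrite [q`__]nth_default ?mulr0 //; apply: leq_trans sq _; lia.
by rewrite [p`__]nth_default ?mul0r //; apply: leq_trans sp _.
Qed.

Lemma top_coefX p a k : top_coef p 1 a -> top_coef (p ^+ k) k (a ^+ k).
Proof.
move=> pa; elim: k => [|k IH]; first by rewrite !expr0; exact: top_coef1.
by rewrite !exprS -add1n; apply: top_coefM.
Qed.

End TopCoef.

Section LineRestriction.
Variables (R : comNzRingType) (n : nat).
Implicit Types (p : {mpoly R[n]}) (x y : 'I_n -> R).

Definition mline x y p : {poly R} :=
  mmap (@polyC R) (fun i => (x i)%:P + (y i)%:P * 'X) p.

Lemma horner_mline x y p t : (mline x y p).[t] = p.@[fun i => x i + t * y i].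
Proof.
rewrite -horner_evalE rmorph_mmap; apply: eq_mmap => [c|i] /=.
  by rewrite horner_evalE hornerC.
by rewrite horner_evalE !hornerE mulrC.
Qed.

Lemma horner_deriv_mline x y p t :
  (mline x y p)^`().[t] = \sum_i y i * p^`M(i).@[fun j => x j + t * y j].
Proof.
rewrite deriv_mmap horner_sum; apply: eq_bigr => i _.
rewrite hornerM -/(mline _ _ _) horner_mline mulrC derivD derivC add0r.
by rewrite derivM derivC derivX mul0r add0r mulr1 hornerC.
Qed.

Lemma mline_dhomog d x y p :
  p \is d.-homog -> top_coef (mline x y p) d p.@[y].
Proof.
move=> /dhomogP p_d; rewrite /mline /mmap mevalE big_seq [X in top_coef _ _ X]big_seq.
elim/big_rec2: _ => [|m a b m_p IH]; first exact: top_coef0.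
apply: top_coefD => //; apply: top_coefCM.
rewrite /mmap1; have <- : (\sum_i m i)%N = d by rewrite -mdegE p_d.
elim: (index_enum _) => [|i s IHs]; first by rewrite !big_nil; exact: top_coef1.
rewrite !big_cons; apply: top_coefM => //; apply: top_coefX.
split; last by rewrite coefD coefC coefCM coefX add0r mulr1.
by rewrite addrC size_MXaddC size_polyC; case: ifP => // _; exact: leq_b1.
Qed.

Lemma meval_mcoeff0 p : p.@[fun=> 0] = p@_0.
Proof.
rewrite mevalE {3}(mpolyE p) raddf_sum /=; apply: eq_bigr => m _.
rewrite mcoeffZ mcoeffX; congr (_ * _).
have [->|nz_m] := eqVneq m 0%MM; first by rewrite big1 // => i _; rewrite mnm0E expr0.
have [i m_i] : exists i, m i != 0%N.
  apply/existsP; apply: contraR nz_m => /existsPn m0; apply/eqP/mnmP => i.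
  by rewrite mnm0E; apply/eqP; move: (m0 i); rewrite negbK.
by rewrite (bigD1 i) //= expr0n (negbTE m_i) mul0r.
Qed.

Definition mline_coef y (k : nat) p : {mpoly R[n]} :=
  (mmap (fun c => (c%:MP)%:P) (fun i => ('X_i)%:P + ((y i)%:MP)%:P * 'X) p)`_k.

Lemma meval_mline_coef x y k p : (mline_coef y k p).@[x] = (mline x y p)`_k.
Proof.
rewrite -coef_map rmorph_mmap /mline.
rewrite (eq_mmap (f2 := @polyC R) (h2 := fun i => (x i)%:P + (y i)%:P * 'X)) //.
  by move=> c /=; rewrite map_polyC /= mevalC.
by move=> i /=; rewrite rmorphD rmorphM /= !map_polyC map_polyX /= mevalXU mevalC.
Qed.

End LineRestriction.

Section VanishingPolynomials.
Variables (R : numDomainType) (n : nat).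
Implicit Types p : {mpoly R[n]}.

Lemma meval_mderiv_eq0 p :
  (forall x, p.@[x] = 0) -> forall i x, p^`M(i).@[x] = 0.
Proof.
move=> p0 i x; pose e j : R := (i == j)%:R.
have line0 : mline x e p = 0 by apply: horner_eq0_poly => t; rewrite horner_mline.
have := horner_deriv_mline x e p 0; rewrite line0 deriv0 horner0.
rewrite (bigD1 i) //= big1 ?addr0 => [|j /negbTE ne_ij]; last first.
  by rewrite /e eq_sym ne_ij mul0r.
by rewrite /e eqxx mul1r => ->; apply: meval_eq => j; rewrite mul0r addr0.
Qed.

Lemma meval_eq0_mpoly p : (forall x, p.@[x] = 0) -> p = 0.
Proof.
move=> p0; have iter0 (s : seq 'I_n) x : (foldr (@mderiv n R) p s).@[x] = 0.
  by elim: s x => [|i s IH] x //=; apply: meval_mderiv_eq0.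
(* The m-th derivative at the origin is p@_m times a product of factorials. *)
apply/mpolyP => m; rewrite mcoeff0.
have := iter0 (flatten [seq nseq (m i) i | i <- enum 'I_n]) (fun=> 0).
rewrite -mderivm_foldr meval_mcoeff0 mcoeff_mderivm addm0 => /eqP.
rewrite mulrn_eq0 eqn0Ngt prodn_gt0 => [/eqP //|i]; by rewrite ffact_gt0.
Qed.

End VanishingPolynomials.

Lemma cubic_multiple_roots (R : rcfType) (Q : {poly R}) :
  size Q = 4 -> (forall t, root Q t -> root Q^`() t) ->
  27%:R * Q`_3 ^+ 2 * Q`_0 = Q`_2 ^+ 3.
Proof.
move=> sQ multQ; have a0 : Q`_3 != 0.
  have : lead_coef Q != 0 by rewrite lead_coef_eq0 -size_poly_eq0 sQ.
  by rewrite lead_coefE sQ.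
have hornerQ t : Q.[t] = Q`_0 + Q`_1 * t + Q`_2 * t ^+ 2 + Q`_3 * t ^+ 3.
  rewrite (@horner_coef_wide _ 4) ?sQ // !big_ord_recl big_ord0 /=.
  by rewrite expr0 mulr1 expr1 addr0 !addrA.
have hornerQ' t : Q^`().[t] = Q`_1 + Q`_2 * 2%:R * t + Q`_3 * 3%:R * t ^+ 2.
  rewrite (@horner_coef_wide _ 3); last first.
    by have := lt_size_deriv (p := Q); rewrite -size_poly_eq0 sQ; apply.
  rewrite !big_ord_recl big_ord0 /= !coef_deriv.
  by rewrite expr0 mulr1 expr1 addr0 !addrA !mulr_natr mulr1n.
set a := Q`_3 in a0 hornerQ hornerQ' *; set b := Q`_2 in hornerQ hornerQ' *.
set c := Q`_1 in hornerQ hornerQ'; set d := Q`_0 in hornerQ hornerQ' *.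
have [|t0 /[dup] /multQ] := @odd_poly_root _ Q; first by rewrite sQ.
rewrite /root hornerQ hornerQ' => /eqP Q't0 /eqP Qt0.
have ec : c = - (b * 2%:R * t0 + a * 3%:R * t0 ^+ 2).
  by apply/eqP; rewrite -subr_eq0 -Q't0; apply/eqP; ring.
have ed : d = - (c * t0 + b * t0 ^+ 2 + a * t0 ^+ 3).
  by apply/eqP; rewrite -subr_eq0 -Qt0; apply/eqP; ring.
(* As t0 is a double root, the third root t1 satisfies 2 t0 + t1 = - b / a. *)
pose t1 := - b / a - 2%:R * t0.
have /multQ : root Q t1 by rewrite /root hornerQ ed ec /t1; apply/eqP; field.
rewrite /root hornerQ' ec /t1 => /eqP Q't1.
have : a * (- b / a - 3%:R * t0) ^+ 2 = 0 by rewrite -Q't1; field.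
move/eqP; rewrite mulf_eq0 (negbTE a0) sqrf_eq0 /= => /eqP t0_triple.
have eb : b = - (3%:R * a * t0).
  by rewrite -[RHS]subr0 -(mulr0 a) -t0_triple; field.
by rewrite ed ec eb; ring.
Qed.

Lemma singular_cubic_cube (R : rcfType) (n : nat) (f : {mpoly R[n]}) y :
  f \is 3.-homog -> f.@[y] != 0 ->
  (forall z, f.@[z] = 0 -> forall i, f^`M(i).@[z] = 0) ->
  (27%:R * f.@[y] ^+ 2) *: f = mline_coef y 2 f ^+ 3.
Proof.
move=> f3 fy sing; apply/eqP; rewrite -subr_eq0; apply/eqP.
apply: meval_eq0_mpoly => x; apply/eqP; rewrite mevalB mevalZ rmorphXn /= subr_eq0.
rewrite meval_mline_coef; have [sQ topQ] := mline_dhomog x y f3.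
have Q4 : size (mline x y f) = 4.
  apply/eqP; rewrite eqn_leq sQ; apply: contraR fy; rewrite -ltnNge ltnS => s3.
  by rewrite -topQ nth_default.
have multQ t : root (mline x y f) t -> root (mline x y f)^`() t.
  rewrite /root horner_mline horner_deriv_mline => /eqP /sing fz.
  by rewrite big1 // => i _; rewrite fz mulr0.
rewrite -(cubic_multiple_roots Q4 multQ) topQ -horner_coef0 horner_mline.
by apply/eqP; congr (_ * _); apply: meval_eq => i; rewrite mul0r addr0.
Qed.

Lemma cube_not_irreducible (A : comUnitRingType) (u L : A) :
  u \is a GRing.unit -> ~ irreducible_elt (u * L ^+ 3).
Proof.
move=> uU [_ [nU irr]]; have uL2 : u * L ^+ 3 = L * (u * L ^+ 2).
  by rewrite [RHS]mulrCA -exprS.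
have LU : L \is a GRing.unit.
  by case: (irr _ _ uL2) => //; rewrite unitrM unitrX_pos // => /andP[].
by move: nU; rewrite unitrM uU unitrX.
Qed.

Theorem lemma1 (R : realType) (n : nat) (f : {mpoly R[n]}) :
  f \is 3.-homog -> irreducible_elt f -> f != 0 ->
  exists x : 'I_n -> R, zero_set f x /\ regular_point f x.
Proof.
move=> f3 f_irr f0; apply: NNPP => no_regular.
have sing z : f.@[z] = 0 -> forall i, f^`M(i).@[z] = 0.
  move=> fz i; apply: NNPP => dz; apply: no_regular.
  by exists z; split=> //; exists i; apply/eqP.
have [y fy] : exists y, f.@[y] != 0.
  apply: NNPP => all0; move/eqP: f0; apply; apply: meval_eq0_mpoly => y.
  by apply: NNPP => fy; apply: all0; exists y; apply/eqP.
pose c := 27%:R * f.@[y] ^+ 2.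
have c0 : c != 0 by rewrite mulf_neq0 ?expf_neq0 ?pnatr_eq0.
have cU : (c^-1)%:MP_[n] \is a GRing.unit.
  by apply/unitrP; exists c%:MP; rewrite -!mpolyCM mulVf ?mulfV.
apply: (cube_not_irreducible (L := mline_coef y 2 f) cU).
by rewrite mul_mpolyC -(singular_cubic_cube f3 fy sing) scalerA mulVf ?scale1r.
Qed.
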